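(* Let $\tau=e^{2\pi i/3}$ and define on $\mathbb{C}$ the maps $q_1(t)=-t-1$, $q_\tau(t)=-t-\tau$, $q_{\tau^2}(t)=-t-\tau^2$. Consider the infinite directed graph with vertices $a_{i,j}$ (row $1$: $a_{1,1}$; rows $2,3$: $a_{i,1},a_{i,2}$; for $i\ge4$, $1\le j\le \frac i2+1$ if $i$ even and $1\le j\le\frac{i-1}{2}+1$ if $i$ odd) and labelled edges: $a_{1,1}\to a_{2,1}$ labelled $q_\tau$, $a_{1,1}\to a_{2,2}$ labelled $q_{\tau^2}$; for every $k\ge1$ and $1\le j\le k+1$: $a_{2k,j}\to a_{2k+1,j}$ labelled $q_1$, $a_{2k+1,j}\to a_{2k+2,j}$ labelled $q_\tau$, $a_{2k+1,j}\to a_{2k+2,j+1}$ labelled $q_{\tau^2}$. Assign $t(1,1)=-2$ and, for a vertex $a_{i,j}$, let $t(i,j)$ be the value obtained from $-2$ by applying successively the maps labelling the edges of a directed path from $a_{1,1}$ to $a_{i,j}$. Then \[t(1,1)=-2,\quad t(2,1)=2-\tau,\quad t(3,1)=-3+\tau;\] for all $i\ge2$: \[t(2i,1)=t(2,1)+(i-1)(1-\tau),\qquad t(2i+1,1)=t(3,1)-(i-1)(1-\tau);\] and for all $i\ge2$ and $2\le j\le i+1$: \[t(2i,j)=t(2i,1)+(j-1)(1+2\tau),\qquad t(2i+1,j)=t(2i+1,1)-(j-1)(1+2\tau).\]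
   Context: In the paper, $t(i,j)$ is the parameter of the elliptic pencil (member of Lins Neto's family of foliations $\Omega+t\,\Xi=0$) at entry $a_{i,j}$ of a diagram of bifurcations of quadratic Cremona maps $Q_1,Q_\tau,Q_{\tau^2}$ preserving the dual Hesse arrangement, starting from the pencil with parameter $-2$; the strict transform under $Q_1,Q_\tau,Q_{\tau^2}$ changes the parameter by $q_1,q_\tau,q_{\tau^2}$ respectively, which is the recursion stated above. Note $1+\tau+\tau^2=0$. *)

From HB Require Import structures.
From mathcomp Require Import all_boot all_order all_algebra all_field.
Set Implicit Arguments. Unset Strict Implicit. Unset Printing Implicit Defensive.
Import Order.TTheory GRing.Theory Num.Theory.
Local Open Scope ring_scope.

(* tau = e^{2 pi i / 3} = -1/2 + i sqrt(3)/2 *)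
Definition tau : algC := - (1 / 2%:R) + 'i * (sqrtC 3%:R / 2%:R).

Definition q1 (t : algC) : algC := - t - 1.
Definition qtau (t : algC) : algC := - t - tau.
Definition qtau2 (t : algC) : algC := - t - tau ^+ 2.

(* Labelled edges of the diagram: edge i j i' j' f  means a_{i,j} -> a_{i',j'}
   labelled by f. *)
Inductive edge : nat -> nat -> nat -> nat -> (algC -> algC) -> Prop :=
| edge_11_21 : edge 1 1 2 1 qtau
| edge_11_22 : edge 1 1 2 2 qtau2
| edge_even_odd k j : (1 <= k)%N -> (1 <= j <= k.+1)%N ->
    edge (2 * k) j (2 * k + 1) j q1
| edge_odd_even k j : (1 <= k)%N -> (1 <= j <= k.+1)%N ->
    edge (2 * k + 1) j (2 * k + 2) j qtau
| edge_odd_even' k j : (1 <= k)%N -> (1 <= j <= k.+1)%N ->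
    edge (2 * k + 1) j (2 * k + 2) j.+1 qtau2.

Inductive path_value : nat -> nat -> algC -> Prop :=
| pv_start : path_value 1 1 (-2)
| pv_step i j i' j' f v : path_value i j v -> edge i j i' j' f ->
    path_value i' j' (f v).

(* t(i,j) = v : t(i,j) is well defined (a path exists and every path gives the
   same value) and equals v. *)
Definition t_is (i j : nat) (v : algC) : Prop :=
  path_value i j v /\ forall w, path_value i j w -> w = v.

(* Guess the closed form: t_even k j on the even row 2k and its image under
   q1 on the odd row 2k+1.  Using 1 + tau + tau^2 = 0, each labelled edge maps
   the closed form at its source to the closed form at its target, so every
   path from a_{1,1} to a_{i,j} yields the same value; and every vertex of the
   diagram is reached by some path, row by row. *)
From HB Require Import structures.
From mathcomp Require Import all_boot all_order all_algebra all_field.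
From mathcomp Require Import ring zify.
Set Implicit Arguments. Unset Strict Implicit.
Import Order.TTheory GRing.Theory Num.Theory.
Local Open Scope ring_scope.

Lemma tau_sqr : tau ^+ 2 = - 1 - tau.
Proof.
have tau_cyclotomic : tau ^+ 2 + tau + 1 = 0.
  have -> : tau ^+ 2 + tau + 1 = (1 + ('i * sqrtC 3%:R) ^+ 2) / 4%:R + 1 / 2%:R.
    by rewrite /tau; field.
  by rewrite exprMn sqrCi sqrtCK; field.
by apply/eqP; rewrite -subr_eq0 -tau_cyclotomic; apply/eqP; ring.
Qed.

Definition t_even (k j : nat) : algC :=
  (2%:R - tau) + (k%:R - 1) * (1 - tau) + (j%:R - 1) * (1 + 2%:R * tau).

Definition t_closed (i j : nat) : algC :=
  if odd i then q1 (t_even i./2 j) else t_even i./2 j.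

Lemma t_closed_even k j : t_closed (2 * k) j = t_even k j.
Proof. by rewrite /t_closed oddM mul2n doubleK. Qed.

Lemma t_closed_odd k j : t_closed (2 * k + 1) j = q1 (t_even k j).
Proof. by rewrite /t_closed addn1 /= oddM mul2n uphalf_double. Qed.

Lemma t_closed11 : t_closed 1 1 = -2.
Proof. by rewrite (t_closed_odd 0) /q1 /t_even; ring. Qed.

Lemma edge_closed i j i' j' f :
  edge i j i' j' f -> f (t_closed i j) = t_closed i' j'.
Proof.
case=> [||k {}j _ _|k {}j _ _|k {}j _ _].
- by rewrite (t_closed_odd 0) (t_closed_even 1) /qtau /q1 /t_even; ring.
- by rewrite (t_closed_odd 0) (t_closed_even 1) /qtau2 /q1 /t_even tau_sqr; ring.
- by rewrite t_closed_even t_closed_odd.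
- by rewrite -mulnSr t_closed_odd t_closed_even /qtau /q1 /t_even -natr1; ring.
- by rewrite -mulnSr t_closed_odd t_closed_even /qtau2 /q1 /t_even tau_sqr
    -!natr1; ring.
Qed.

Lemma path_value_closed i j v : path_value i j v -> v = t_closed i j.
Proof.
by elim=> [|{}i {}j i' j' f {}v _ -> /edge_closed //]; rewrite t_closed11.
Qed.

Definition reachable (i j : nat) : Prop := exists v, path_value i j v.

Lemma reachable_step i j i' j' f : reachable i j -> edge i j i' j' f -> reachable i' j'.
Proof. by case=> v pv e; exists (f v); apply: pv_step pv e. Qed.

Lemma reachable11 : reachable 1 1.
Proof. by exists (-2); apply: pv_start. Qed.

Lemma reachable_even k j : (1 <= k)%N -> (1 <= j <= k.+1)%N -> reachable (2 * k) j.
Proof.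
elim: k j => [//|[|k] IHk] j _ j_range.
  have [->|->] : j = 1%N \/ j = 2%N by lia.
  - exact: reachable_step reachable11 edge_11_21.
  - exact: reachable_step reachable11 edge_11_22.
have odd_row j' : (1 <= j' <= k.+2)%N -> reachable (2 * k.+1 + 1) j'.
  move=> j'_range; apply: reachable_step (IHk j' isT j'_range) _.
  exact: edge_even_odd.
rewrite mulnSr; have [j_le|->] : (j <= k.+2)%N \/ j = k.+3 by lia.
- by apply: reachable_step (odd_row j _) _; [lia | apply: edge_odd_even; lia].
- by apply: reachable_step (odd_row k.+2 _) _; [lia | apply: edge_odd_even'; lia].
Qed.

Lemma reachable_odd k j : (1 <= k)%N -> (1 <= j <= k.+1)%N -> reachable (2 * k + 1) j.
Proof.
move=> k_gt0 j_range.
exact: reachable_step (reachable_even k_gt0 j_range) (edge_even_odd k_gt0 j_range).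
Qed.

Lemma t_is_closed i j : reachable i j -> t_is i j (t_closed i j).
Proof.
case=> v pv; split; last exact: path_value_closed.
by rewrite -(path_value_closed pv).
Qed.

Lemma t_is_eq i j v w : t_is i j v -> v = w -> t_is i j w.
Proof. by move=> ? <-. Qed.

Theorem mainTheorem2 :
  t_is 1 1 (-2) /\
  t_is 2 1 (2%:R - tau) /\
  t_is 3 1 (- 3%:R + tau) /\
  (forall i : nat, (2 <= i)%N ->
     t_is (2 * i) 1 ((2%:R - tau) + (i%:R - 1) * (1 - tau)) /\
     t_is (2 * i + 1) 1 ((- 3%:R + tau) - (i%:R - 1) * (1 - tau))) /\
  (forall i j : nat, (2 <= i)%N -> (2 <= j <= i + 1)%N ->
     t_is (2 * i) j
       (((2%:R - tau) + (i%:R - 1) * (1 - tau)) + (j%:R - 1) * (1 + 2%:R * tau)) /\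
     t_is (2 * i + 1) j
       (((- 3%:R + tau) - (i%:R - 1) * (1 - tau)) - (j%:R - 1) * (1 + 2%:R * tau))).
Proof.
have row k j : (1 <= k)%N -> (1 <= j <= k.+1)%N ->
    t_is (2 * k) j (t_even k j) /\ t_is (2 * k + 1) j (q1 (t_even k j)).
  move=> k_gt0 j_range; rewrite -t_closed_odd -t_closed_even.
  by split; apply: t_is_closed; [apply: reachable_even | apply: reachable_odd].
have [t21 t31] := row 1%N 1%N isT isT.
split; first by rewrite -t_closed11; apply: t_is_closed reachable11.
split; first by apply: t_is_eq t21 _; rewrite /t_even; ring.
split; first by apply: t_is_eq t31 _; rewrite /q1 /t_even; ring.
split=> [i i_ge2 | i j i_ge2 j_range].
  have [ti1_even ti1_odd] := row i 1%N ltac:(lia) isT.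
  by split; [apply: t_is_eq ti1_even _ | apply: t_is_eq ti1_odd _];
    rewrite /q1 /t_even; ring.
have [tij_even tij_odd] := row i j ltac:(lia) ltac:(lia).
by split; [apply: t_is_eq tij_even _ | apply: t_is_eq tij_odd _];
  rewrite /q1 /t_even; ring.
Qed.
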